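(* Let $n\ge 3$ and let $\Gamma=\mathrm{W}(2^n,2)$, with vertex-set $\mathbb{Z}_{2^n}\times\mathbb{Z}_2$ where $(i,u)$ is adjacent to $(j,v)$ iff $i-j\in\{-1,1\}$. Let $\sigma$ and $\tau$ be the permutations of $\mathbb{Z}_{2^n}$ given by $\sigma=(1\,3\,5\,\ldots\,2^n-1)(0\,2\,4\,\ldots\,2^n-2)$ (i.e. $i\mapsto i+2$) and $\tau\colon i\mapsto -i+4$, acting on $\mathrm{V}(\Gamma)$ via the first coordinate (these are automorphisms of $\Gamma$). For $i\in\mathbb{Z}_{2^n}$, let $\alpha_i$ be the automorphism of $\Gamma$ interchanging $(i,0)$ and $(i,1)$ and fixing all other vertices. Let $x=\alpha_1\sigma$ and let $z$ be the product of all $\alpha_i$ with $i\not\equiv 1\pmod 4$, i.e. $z=\alpha_0\alpha_2\alpha_3\cdots\alpha_{2^n-4}\alpha_{2^n-2}\alpha_{2^n-1}$. Let $G=\langle x,\tau,z\rangle$. Then $G$ is a group of automorphisms of $\Gamma$ of order $2^{n+2}$ acting regularly on $\mathrm{E}(\Gamma)$, and every involution of $G$ fixes a vertex of $\Gamma$.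
   Context: Graphs are finite and simple. A group acts regularly on a set if it acts transitively with trivial point stabilisers. *)

From HB Require Import structures.
From mathcomp Require Import all_boot all_order all_algebra all_fingroup.
Set Implicit Arguments. Unset Strict Implicit. Unset Printing Implicit Defensive.
Import GRing.Theory.

Definition vert (n : nat) : finType := ('Z_(2 ^ n) * bool)%type.

Definition adj (n : nat) (a b : vert n) : bool :=
  ((a.1 - b.1)%R == 1%R) || ((b.1 - a.1)%R == 1%R).

Definition edges (n : nat) : {set {set vert n}} :=
  [set e | [exists a : vert n, exists b : vert n, adj a b && (e == [set a; b])]].

Definition is_aut (n : nat) (g : {perm vert n}) : Prop :=
  forall a b : vert n, adj (g a) (g b) = adj a b.

Definition sigma_fun (n : nat) (v : vert n) : vert n := ((v.1 + 2%:R)%R, v.2).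
Lemma sigma_inj n : injective (@sigma_fun n).
Proof.
apply: (@can_inj _ _ _ (fun v : vert n => ((v.1 - 2%:R)%R, v.2))).
by move=> [i u]; rewrite /sigma_fun; congr pair; rewrite addrK.
Qed.
Definition sigma (n : nat) : {perm vert n} := perm (@sigma_inj n).

Definition tau_fun (n : nat) (v : vert n) : vert n := ((- v.1 + 4%:R)%R, v.2).
Lemma tau_inj n : injective (@tau_fun n).
Proof.
apply: (@can_inj _ _ _ (@tau_fun n)).
by move=> [i u]; rewrite /tau_fun; congr pair; rewrite opprD opprK addrNK.
Qed.
Definition tau (n : nat) : {perm vert n} := perm (@tau_inj n).

Definition alpha_fun (n : nat) (i : 'Z_(2 ^ n)) (v : vert n) : vert n :=
  if v.1 == i then (v.1, ~~ v.2) else v.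
Lemma alpha_inj n i : injective (@alpha_fun n i).
Proof.
have K : cancel (@alpha_fun n i) (@alpha_fun n i).
  move=> [j u]; rewrite /alpha_fun /=.
by case: (eqVneq j i) => [->|ne] /=; rewrite ?eqxx ?negbK // (negbTE ne).
exact: can_inj K.
Qed.
Definition alpha (n : nat) (i : 'Z_(2 ^ n)) : {perm vert n} := perm (@alpha_inj n i).

(* Products of permutations are in MathComp's convention:
   (g * h) v = h (g v), i.e. g is applied first. *)
Definition x_elt (n : nat) : {perm vert n} := (@alpha n 1%R * @sigma n)%g.

(* z = product of all alpha_i with i not congruent to 1 mod 4
   (the alpha_i commute, so the order of the product is irrelevant). *)
Definition z_elt (n : nat) : {perm vert n} :=
  (\prod_(i : 'Z_(2 ^ n) | (val i %% 4 != 1)%N) @alpha n i)%g.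

Definition Ggrp (n : nat) : {group {perm vert n}} :=
  <<[set @x_elt n; @tau n; @z_elt n]>>%G.

From mathcomp Require Import all_boot all_order all_algebra all_fingroup.
From mathcomp Require Import ring zify.
Set Implicit Arguments. Unset Strict Implicit. Unset Printing Implicit Defensive.
Import GRing.Theory.

(* Write h = 2^(n-1).  Indexing the odd vertex (2p + 3, [p >= h]) by p in
   Z_(2^n), the generators x, tau and z act on odd vertices as p |-> p + 1,
   p |-> -p + h - 1 and p |-> (1 + h) p + h, and on first coordinates as
   i |-> +-i + t.  So G consists of the 4 * 2^n maps acting on odd vertices as
   p |-> +-(1 + h)^b p + c; their images of one edge are pairwise distinct and
   exhaust the edges, since an edge is determined by its odd endpoint, its
   direction and the bit of its even endpoint.
   An involution p |-> a p + c satisfies (a + 1) c = 0, and for each of the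
   four multipliers a this linear condition yields a fixed vertex. *)

Lemma eq_set2_sep (T : finType) (a1 b1 a2 b2 : T) :
  a1 != b2 -> b1 != a2 -> [set a1; b1] = [set a2; b2] -> a1 = a2 /\ b1 = b2.
Proof.
move=> a1b2 b1a2 E; have a1E : a1 \in [set a2; b2] by rewrite -E set21.
have b1E : b1 \in [set a2; b2] by rewrite -E set22.
split; first by case/set2P: a1E a1b2 => ->; rewrite ?eqxx.
by case/set2P: b1E b1a2 => ->; rewrite ?eqxx.
Qed.

Lemma aut_imset_edge n (g : {perm vert n}) e :
  is_aut g -> e \in edges n -> g @: e \in edges n.
Proof.
move=> aut_g; rewrite !inE => /existsP[a /existsP[b /andP[ab /eqP->]]].
apply/existsP; exists (g a); apply/existsP; exists (g b).
by rewrite aut_g ab imsetU1 imset_set1 eqxx.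
Qed.

Lemma prod_alphaE n (r : seq 'Z_(2 ^ n)) (P : pred 'Z_(2 ^ n)) (v : vert n) :
  uniq r -> (\prod_(i <- r | P i) alpha i)%g v =
    if (v.1 \in r) && P v.1 then (v.1, ~~ v.2) else v.
Proof.
elim: r v => [|i r IHr] v /=; first by rewrite big_nil perm1.
case/andP=> i_r uniq_r; rewrite big_cons in_cons.
case: (eqVneq v.1 i) => [v_i|v_i] /=; last first.
  by case: ifP => _; rewrite ?permM ?permE /alpha_fun ?(negbTE v_i) IHr.
rewrite v_i /=; case: ifP => Pi.
  by rewrite permM IHr // permE /alpha_fun v_i eqxx /= (negbTE i_r).
by rewrite IHr // v_i (negbTE i_r).
Qed.

Section WreathGroup.

Local Open Scope ring_scope.

Variable n : nat.
Hypothesis n_gt1 : (1 < n)%N.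

Local Notation Z := 'Z_(2 ^ n).

(** * Arithmetic in Z_(2^n) *)

Lemma expn2_ge4 : (4 <= 2 ^ n)%N.
Proof. by rewrite -[4%N]/(2 ^ 2)%N leq_exp2l. Qed.

Lemma expn2_gt1 : (1 < 2 ^ n)%N.
Proof. by apply: leq_trans expn2_ge4. Qed.

Lemma val_natZ m : nat_of_ord (m%:R : Z) = (m %% 2 ^ n)%N.
Proof. exact: val_Zp_nat expn2_gt1 m. Qed.

Lemma valZ_lt (x : Z) : (nat_of_ord x < 2 ^ n)%N.
Proof. by apply: leq_trans (ltn_ord x) _; rewrite Zp_cast // expn2_gt1. Qed.

Lemma valZ_small m : (m < 2 ^ n)%N -> nat_of_ord (m%:R : Z) = m.
Proof. by move=> lt_m; rewrite val_natZ modn_small. Qed.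

Lemma eqZE (x y : Z) : (x == y) = (nat_of_ord x == nat_of_ord y).
Proof. by []. Qed.

Lemma val_one : nat_of_ord (1 : Z) = 1%N.
Proof. exact: valZ_small expn2_gt1. Qed.

Lemma valZD (a b : Z) :
  nat_of_ord (a + b) = ((nat_of_ord a + nat_of_ord b) %% 2 ^ n)%N.
Proof. by rewrite -[a in LHS]natr_Zp -[b in LHS]natr_Zp -natrD val_natZ. Qed.

Lemma valZM (a b : Z) :
  nat_of_ord (a * b) = ((nat_of_ord a * nat_of_ord b) %% 2 ^ n)%N.
Proof. by rewrite -[a in LHS]natr_Zp -[b in LHS]natr_Zp -natrM val_natZ. Qed.

Lemma expn2_halves : (2 ^ n = 2 ^ n.-1 + 2 ^ n.-1)%N.
Proof. by rewrite addnn -mul2n -expnS prednK //; lia. Qed.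

Lemma natZ_expn2 : ((2 ^ n)%:R : Z) = 0.
Proof. exact: pchar_Zp expn2_gt1. Qed.

Definition half : Z := (2 ^ n.-1)%:R.

Definition upper (p : Z) : bool := (2 ^ n.-1 <= nat_of_ord p)%N.

Lemma val_half : nat_of_ord half = (2 ^ n.-1)%N.
Proof. by apply: valZ_small; rewrite expn2_halves -addn1 leq_add2l expn_gt0. Qed.

Lemma half_neq0 : half != 0.
Proof. by apply/eqP => /(congr1 (@nat_of_ord _)); rewrite val_half /=; lia. Qed.

Lemma half_double : half + half = 0.
Proof. by rewrite -natrD -expn2_halves natZ_expn2. Qed.

Lemma mul2half : 2 * half = 0.
Proof. by rewrite mulrDl mul1r half_double. Qed.

Lemma half_mul2 (x : Z) : half * (2 * x) = 0.
Proof. by rewrite mulrA [half * 2]mulrC mul2half mul0r. Qed.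

Lemma half_sqr : half * half = 0.
Proof.
rewrite -natrM -expnD (_ : n.-1 + n.-1 = n + (n - 2))%N; last by lia.
by rewrite expnD natrM natZ_expn2 mul0r.
Qed.

Lemma Z_halves (x : Z) :
  x = 2 * ((nat_of_ord x)./2)%:R + (odd (nat_of_ord x))%:R.
Proof.
rewrite -[x in LHS]natr_Zp -[nat_of_ord x in LHS]odd_double_half.
by rewrite natrD -mul2n natrM addrC.
Qed.

Lemma mul2Z_eq0 (r : Z) : (2 * r == 0) = (r == 0) || (r == half).
Proof.
apply/eqP/orP => [|[] /eqP ->]; rewrite ?mulr0 ?mul2half //.
move/(congr1 (@nat_of_ord _)).
rewrite valZM valZ_small; last exact: leq_trans expn2_ge4.
have := valZ_lt r; have := val_half; rewrite !eqE /= => -> lt_r.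
have := expn2_halves; case: (ltnP (2 * r) (2 ^ n)) => [lt_2r | le_2r] E.
  by rewrite modn_small //; lia.
by rewrite -(subnK le_2r) modnDr modn_small; lia.
Qed.

Lemma half_mul (x : Z) : half * x = half *+ odd (nat_of_ord x).
Proof.
by rewrite {1}(Z_halves x) mulrDr half_mul2 add0r; case: odd; rewrite ?mulr1 ?mulr0.
Qed.

Definition quarter : Z := (2 ^ n.-2)%:R.

Lemma quarter_double : 2 * quarter = half.
Proof. by rewrite -natrM -expnS; congr (2 ^ _)%:R; lia. Qed.

Lemma half_quarter : (2 < n)%N -> half * quarter = 0.
Proof.
move=> n_gt2; rewrite -natrM -expnD (_ : n.-1 + n.-2 = n + (n - 3))%N; last by lia.
by rewrite expnD natrM natZ_expn2 mul0r.
Qed.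

Lemma mul2_neq_odd (r p : Z) : 2 * r != 2 * p + 1.
Proof.
apply/eqP => /(congr1 (fun x => half * x)).
by rewrite mulrDr !half_mul2 mulr1 add0r => /esym/eqP; rewrite (negbTE half_neq0).
Qed.

Lemma signZ_inj : injective (fun s : bool => (-1) ^+ s : Z).
Proof.
have one_neqN1 : (1 : Z) != -1.
  rewrite -subr_eq0 opprK -[1 + 1]/(2%:R : Z); apply/eqP => /(congr1 (@nat_of_ord _)).
  by rewrite valZ_small //; apply: leq_trans expn2_ge4.
case=> [] [] //= /eqP; rewrite ?expr0 ?expr1 => /eqP e; move: one_neqN1.
  by rewrite e eqxx.
by rewrite -e eqxx.
Qed.

Lemma upper_addh (p : Z) : upper (p + half) = ~~ upper p.
Proof.
have := valZ_lt p; have := expn2_halves; rewrite /upper valZD val_half => E lt_p.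
case: (ltnP (p + 2 ^ n.-1) (2 ^ n)) => [lt_ph | le_ph].
  by rewrite modn_small //; lia.
by rewrite -(subnK le_ph) modnDr modn_small; lia.
Qed.

Lemma upper_add1 (p : Z) : upper (p + 1) = upper p (+) (2 * (p + 1) == 0).
Proof.
have := valZ_lt p; have := expn2_halves; have := expn2_ge4.
rewrite mul2Z_eq0 /upper !eqZE !valZD val_half val_one => ge4 E lt_p.
case: (ltnP (p + 1) (2 ^ n)) => [lt_p1 | le_p1].
  by rewrite modn_small //; case: (leqP (2 ^ n.-1) p) => /= ?; lia.
by rewrite -(subnK le_p1) modnDr modn_small; case: (leqP (2 ^ n.-1) p) => /= ?; lia.
Qed.

Lemma upper_oppB1 (p : Z) : upper (- p - 1) = ~~ upper p.
Proof.
have lt_p := valZ_lt p.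
have -> : - p - 1 = ((2 ^ n).-1 - p)%:R.
  apply/esym/eqP; rewrite -opprD -addr_eq0 -[p + 1]/(p + 1%:R).
  rewrite -[p in _ + (p + _)]natr_Zp -!natrD addnA.
  have -> : ((2 ^ n).-1 - p + p + 1 = 2 ^ n)%N by lia.
  by rewrite natZ_expn2.
by rewrite /upper valZ_small; have := expn2_halves; lia.
Qed.

(* The shift by 3 and the bit [upper p] make x act as p |-> p + 1 (x_eltE). *)
Definition odd_vert (p : Z) : vert n := (2 * p + 3, upper p).

Lemma odd_vert_inj : injective odd_vert.
Proof.
move=> p q E; have /addIr Epq : 2 * p + 3 = 2 * q + 3 := congr1 fst E.
have Upq : upper p = upper q := congr1 snd E.
have /eqP : 2 * (p - q) = 0 by rewrite mulrBr Epq subrr.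
rewrite mul2Z_eq0 subr_eq0 subr_eq => /orP[/eqP //|/eqP p_qh].
by move: Upq; rewrite p_qh addrC upper_addh; case: (upper q).
Qed.

Lemma odd_vert_neq_even p r u : odd_vert p != (2 * r, u).
Proof.
apply: contraNneq (mul2_neq_odd r (p + 1)) => /(congr1 fst) /= <-.
by apply/eqP; ring.
Qed.

Variant vert_spec : vert n -> Type :=
  | VertOdd p : vert_spec (odd_vert p)
  | VertEven r u : vert_spec (2 * r, u).

Lemma vertP v : vert_spec v.
Proof.
case: v => i u; rewrite (Z_halves i); set w : Z := (nat_of_ord i)./2%:R.
case: (odd _) => /=; last by rewrite addr0; exact: VertEven.
have i_odd : 2 * w + 1%:R = 2 * (w - 1) + 3 by ring.
rewrite i_odd; case: (eqVneq (upper (w - 1)) u) => [<-|Uu].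
  exact: VertOdd.
have -> : 2 * (w - 1) + 3 = 2 * (w - 1 + half) + 3.
  by rewrite [2 * (_ + half)]mulrDr mul2half addr0.
have -> : u = upper (w - 1 + half) by rewrite upper_addh; case: u Uu; case: upper.
exact: VertOdd.
Qed.

(** * The affine group *)

Definition twist (b : bool) : Z := 1 + half *+ b.

Definition slope (s b : bool) : Z := (-1) ^+ s * twist b.

Definition offset (s : bool) (c : Z) : Z := 2 * (c + 3 *+ s).

Lemma twistD b1 b2 : twist (b1 (+) b2) = twist b1 * twist b2.
Proof.
case: b1; case: b2; rewrite /twist /= ?mulr0n ?mulr1n ?addr0 ?mulr1 ?mul1r //.
by rewrite mulrDl mul1r mulrDr mulr1 half_sqr addr0 -addrA half_double addr0.
Qed.

Lemma twist_sqr b : twist b * twist b = 1.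
Proof. by rewrite -twistD addbb /twist addr0. Qed.

Lemma mul2_twist b : 2 * twist b = 2.
Proof. by case: b; rewrite /twist ?mulr0n ?addr0 ?mulr1 // mulrDr mul2half mulr1 addr0. Qed.

Lemma slopeM s1 b1 s2 b2 :
  slope (s1 (+) s2) (b1 (+) b2) = slope s1 b1 * slope s2 b2.
Proof. by rewrite /slope signr_addb twistD mulrACA. Qed.

Lemma offsetM s1 c1 s2 b2 c2 :
  offset (s1 (+) s2) (slope s2 b2 * c1 + c2) = (-1) ^+ s2 * offset s1 c1 + offset s2 c2.
Proof.
rewrite /offset /slope -addrA.
have -> : forall x : Z, 2 * ((-1) ^+ s2 * twist b2 * c1 + x) =
    2 * twist b2 * ((-1) ^+ s2 * c1) + 2 * x by move=> x; ring.
by rewrite mul2_twist; case: s1; case: s2; rewrite /= ?expr0 ?expr1; ring.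
Qed.

(* On odd vertices: p |-> slope s b * p + c.  On even vertices: the first
   coordinate maps by i |-> (-1)^s i + offset s c, which odd vertices also
   obey (aff_fun_fst), and the bit is flipped iff b. *)
Definition aff_fun (s : bool) (c : Z) (b : bool) (v : vert n) : vert n :=
  if [pick p | odd_vert p == v] is Some p then odd_vert (slope s b * p + c)
  else ((-1) ^+ s * v.1 + offset s c, v.2 (+) b).

Lemma aff_fun_odd s c b p :
  aff_fun s c b (odd_vert p) = odd_vert (slope s b * p + c).
Proof.
by rewrite /aff_fun; case: pickP => [q /eqP/odd_vert_inj -> //|/(_ p)]; rewrite eqxx.
Qed.

Lemma aff_fun_even s c b r u :
  aff_fun s c b (2 * r, u) = ((-1) ^+ s * (2 * r) + offset s c, u (+) b).
Proof.
rewrite /aff_fun; case: pickP => // p /eqP Ep.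
by have := odd_vert_neq_even p r u; rewrite Ep eqxx.
Qed.

Lemma aff_fun_fst s c b v : (aff_fun s c b v).1 = (-1) ^+ s * v.1 + offset s c.
Proof.
case: (vertP v) => [p|r u]; rewrite ?aff_fun_even // aff_fun_odd /=.
have -> : 2 * (slope s b * p + c) = 2 * twist b * ((-1) ^+ s * p) + 2 * c.
  by rewrite /slope; ring.
by rewrite /offset mul2_twist; case: s; rewrite /= ?expr0 ?expr1; ring.
Qed.

Lemma aff_funM s1 c1 b1 s2 c2 b2 v :
  aff_fun s2 c2 b2 (aff_fun s1 c1 b1 v) =
  aff_fun (s1 (+) s2) (slope s2 b2 * c1 + c2) (b1 (+) b2) v.
Proof.
case: (vertP v) => [p|r u].
  by rewrite !aff_fun_odd slopeM; congr odd_vert; ring.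
rewrite !aff_fun_even.
have -> : (-1) ^+ s1 * (2 * r) + offset s1 c1 = 2 * ((-1) ^+ s1 * r + (c1 + 3 *+ s1)).
  by rewrite /offset; ring.
rewrite aff_fun_even offsetM signr_addb addbA; congr pair.
by rewrite /offset; ring.
Qed.

Lemma aff_fun1 v : aff_fun false 0 false v = v.
Proof.
case: (vertP v) => [p|r u]; rewrite ?aff_fun_even ?aff_fun_odd /slope /twist /offset /=.
  by congr odd_vert; ring.
by rewrite addbF; congr pair; ring.
Qed.

Lemma aff_funK s c b : cancel (aff_fun s c b) (aff_fun s (- (slope s b * c)) b).
Proof. by move=> v; rewrite aff_funM !addbb subrr aff_fun1. Qed.

Definition aff (p : bool * Z * bool) : {perm vert n} :=
  let: (s, c, b) := p in perm (can_inj (aff_funK s c b)).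

Lemma affE s c b v : aff (s, c, b) v = aff_fun s c b v.
Proof. by rewrite permE. Qed.

Lemma affM s1 c1 b1 s2 c2 b2 :
  (aff (s1, c1, b1) * aff (s2, c2, b2))%g =
  aff (s1 (+) s2, slope s2 b2 * c1 + c2, b1 (+) b2).
Proof. by apply/permP => v; rewrite permM !affE aff_funM. Qed.

Lemma aff1 : aff (false, 0, false) = 1%g.
Proof. by apply/permP => v; rewrite affE perm1 aff_fun1. Qed.

Definition Aff : {set {perm vert n}} := [set aff p | p : bool * Z * bool].

Lemma mem_aff p : aff p \in Aff.
Proof. by apply/imsetP; exists p. Qed.

Lemma group_set_Aff : group_set Aff.
Proof.
apply/group_setP; split; first by rewrite -aff1 mem_aff.
by move=> _ _ /imsetP[[[s1 c1] b1] _ ->] /imsetP[[[s2 c2] b2] _ ->]; rewrite affM mem_aff.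
Qed.

Canonical Aff_group := Group group_set_Aff.

Lemma mod4_valZ m : (nat_of_ord (m%:R : Z) %% 4 = m %% 4)%N.
Proof. by rewrite val_natZ modn_dvdm // -[4%N]/(2 ^ 2)%N dvdn_exp2l. Qed.

Lemma mod4_odd (p : Z) : (nat_of_ord (2 * p + 3)%R %% 4 != 1)%N = ~~ odd (nat_of_ord p).
Proof.
rewrite -[p in 2 * p]natr_Zp -natrM -natrD mod4_valZ.
by rewrite -{1}[nat_of_ord p]odd_double_half; case: odd => /=; lia.
Qed.

Lemma mod4_even (r : Z) : (nat_of_ord (2 * r)%R %% 4 != 1)%N.
Proof. by rewrite -[r in 2 * r]natr_Zp -natrM mod4_valZ; lia. Qed.

Lemma x_eltE : x_elt n = aff (false, 1, false).
Proof.
apply/permP => v; rewrite affE permM !permE /alpha_fun /sigma_fun.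
case: (vertP v) => [p|r u].
  rewrite aff_fun_odd /slope /twist /odd_vert /= expr0 mulr0n addr0 !mul1r upper_add1.
  have -> : (2 * p + 3 == 1) = (2 * (p + 1) == 0).
    by rewrite -subr_eq0; congr (_ == 0); ring.
  by case: eqP => _; rewrite /= ?addbT ?addbF; congr pair; ring.
rewrite aff_fun_even /offset expr0 mul1r addbF /=; case: eqP => [E|_].
  by have := mul2_neq_odd r 0; rewrite E mulr0 add0r eqxx.
by rewrite mulr0n addr0 mulr1 addrC.
Qed.

Lemma tauE : tau n = aff (true, half - 1, false).
Proof.
apply/permP => v; rewrite affE permE /tau_fun.
case: (vertP v) => [p|r u]; last first.
  by rewrite aff_fun_even /offset addbF /=; congr pair; rewrite -[LHS]addr0 -mul2half; ring.
rewrite aff_fun_odd /slope /twist /odd_vert /=.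
have -> : -1 * (1 + 0) * p + (half - 1) = - p - 1 + half by ring.
rewrite upper_addh upper_oppB1 negbK; congr pair.
by rewrite -[LHS]addr0 -mul2half; ring.
Qed.

Lemma z_eltE : z_elt n = aff (false, half, true).
Proof.
apply/permP => v; rewrite affE /z_elt prod_alphaE ?index_enum_uniq // mem_index_enum /=.
case: (vertP v) => [p|r u]; last first.
  rewrite mod4_even aff_fun_even /offset /= addbT; congr pair.
  by rewrite -[LHS]addr0 -mul2half; ring.
rewrite aff_fun_odd -[(odd_vert p).1]/(2 * p + 3) mod4_odd /slope /twist expr0 mulr1n.
rewrite !mul1r [(1 + half) * p]mulrDl mul1r half_mul; case: odd => /=.
  by rewrite mulr1n -addrA half_double addr0.
rewrite mulr0n !addr0 /odd_vert upper_addh; congr pair.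
by rewrite -[LHS]addr0 -mul2half; ring.
Qed.

Lemma Ggrp_Aff : Ggrp n :=: Aff.
Proof.
apply/eqP; rewrite eqEsubset gen_subG; apply/andP; split.
  apply/subsetP => g; rewrite !inE -orbA => /or3P[] /eqP->.
  - by rewrite x_eltE; apply: mem_aff.
  - by rewrite tauE; apply: mem_aff.
  - by rewrite z_eltE; apply: mem_aff.
have x_pow k : aff (false, k%:R, false) = (x_elt n ^+ k)%g.
  elim: k => [|k IHk]; first by rewrite aff1.
  by rewrite expgSr -IHk x_eltE affM /slope /twist mulr0n addr0 !mul1r mulrS addrC.
have G_x : x_elt n \in Ggrp n by rewrite mem_gen // !inE eqxx.
have G_tau : tau n \in Ggrp n by rewrite mem_gen // !inE eqxx orbT.
have G_z : z_elt n \in Ggrp n by rewrite mem_gen // !inE eqxx orbT.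
have G_aff s c : aff (s, c, false) \in Ggrp n.
  case: s; last by rewrite -[c]natr_Zp x_pow groupX.
  have -> : aff (true, c, false) = (aff (false, half - 1 - c, false) * tau n)%g.
    by rewrite tauE affM /slope /twist /=; congr (aff (_, _, _)); ring.
  by rewrite groupM // -[_ - c]natr_Zp x_pow groupX.
apply/subsetP => _ /imsetP[[[s c] []] _ ->]; last exact: G_aff.
have -> : aff (s, c, true) = (aff (s, (twist true * (c - half))%R, false) * z_elt n)%g.
  by rewrite z_eltE affM addbF /slope expr0 mul1r mulrA twist_sqr mul1r subrK.
by rewrite groupM.
Qed.

(** * Action on edges *)

Definition edge0 : {set vert n} := [set (2 * 1, false); odd_vert 0].

Lemma aff_edge0 s c b :
  aff (s, c, b) @: edge0 = [set (2 * c + 3 - (-1) ^+ s, b); odd_vert c].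
Proof.
rewrite imsetU1 imset_set1 !affE aff_fun_even aff_fun_odd mulr0 add0r.
by congr [set (_, _); odd_vert _]; rewrite /offset; case: s => /=; ring.
Qed.

Lemma aff_edge0_inj : injective (fun p => aff p @: edge0).
Proof.
have step_even (s : bool) (c : Z) : 2 * c + 3 - (-1) ^+ s = 2 * (c + 1 + s%:R).
  by case: s => /=; ring.
move=> [[s1 c1] b1] [[s2 c2] b2] /=; rewrite !aff_edge0 !step_even.
case/eq_set2_sep; rewrite ?odd_vert_neq_even 1?eq_sym ?odd_vert_neq_even //.
move=> E /odd_vert_inj Ec.
move: E; rewrite -!step_even Ec => E.
have /addrI/oppr_inj/signZ_inj -> := congr1 fst E.
by have /= -> := congr1 snd E.
Qed.

Lemma aff_inj : injective aff.
Proof. by move=> p q Epq; apply: aff_edge0_inj; rewrite /= Epq. Qed.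

Lemma card_Aff : #|Aff| = (2 ^ (n + 2))%N.
Proof.
rewrite card_imset; last exact: aff_inj.
by rewrite !card_prod card_bool card_ord Zp_cast ?expn2_gt1 // expnD; lia.
Qed.

Lemma aff_aut p : is_aut (aff p).
Proof.
case: p => [[s c] b] u v; rewrite /adj !affE !aff_fun_fst.
have diffE x y :
  (-1) ^+ s * x + offset s c - ((-1) ^+ s * y + offset s c) = (-1) ^+ s * (x - y) by ring.
rewrite !diffE {diffE}; case: s; rewrite ?expr0 ?expr1 ?mul1r //.
by rewrite !mulN1r !opprB; exact: orbC.
Qed.

Lemma step_edge_aff a b : a.1 - b.1 = 1 -> exists p, [set a; b] = aff p @: edge0.
Proof.
move/eqP; rewrite subr_eq => /eqP a1.
case: (vertP b) a1 => [c|r u] a1.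
  exists (true, c, a.2); rewrite aff_edge0 expr1 opprK; congr [set _; _].
  by rewrite [a]surjective_pairing a1 addrC.
case: (vertP a) a1 => [c|r' u'] a1; last first.
  by have := mul2_neq_odd r' r; rewrite [2 * r']a1 addrC eqxx.
exists (false, c, u); rewrite aff_edge0 setUC; congr [set (_, _); _].
by move: a1 => /= ->; rewrite expr0; ring.
Qed.

Lemma edge_aff e : e \in edges n -> exists p, e = aff p @: edge0.
Proof.
rewrite inE => /existsP[a /existsP[b /andP[/orP[] /eqP ab /eqP ->]]].
  exact: step_edge_aff.
by rewrite setUC; exact: step_edge_aff.
Qed.

Lemma mem_edge0 : edge0 \in edges n.
Proof.
rewrite inE; apply/existsP; exists (2 * 1, false); apply/existsP; exists (odd_vert 0).
by rewrite eqxx andbT /adj /=; apply/orP; right; apply/eqP; ring.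
Qed.

Lemma setact_perm (g : {perm vert n}) (A : {set vert n}) :
  ('P^*)%act A g = g @: A.
Proof. by rewrite /= setactE. Qed.

Lemma Aff_edge_trans : [transitive Aff, on edges n | 'P^*].
Proof.
apply/imsetP; exists edge0; first exact: mem_edge0.
apply/setP => e; apply/idP/imsetP => [|[_ /imsetP[p _ ->] ->]].
  by case/edge_aff => p ->; exists (aff p); rewrite ?mem_aff ?setact_perm.
by rewrite setact_perm; apply: aut_imset_edge (aff_aut p) mem_edge0.
Qed.

Lemma Aff_edge_stab e : e \in edges n -> ('C_Aff[e | 'P^*])%g = 1%g.
Proof.
case/edge_aff => -[[s c] b] ->; apply/trivgP/subsetP => g.
rewrite inE => /andP[/imsetP[[[s' c'] b'] _ ->] /astab1P].
rewrite setact_perm -imset_comp => E.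
have : (aff (s, c, b) * aff (s', c', b'))%g @: edge0 = aff (s, c, b) @: edge0.
  by rewrite -[RHS]E; apply: eq_imset => v; rewrite permM.
rewrite affM => /aff_edge0_inj/(congr1 aff); rewrite -affM -[RHS]mulg1 => /mulgI ->.
exact: group1.
Qed.

(** * Involutions *)

Lemma aff_fix_translation c :
  2 * c = 0 -> aff (false, c, false) (0, false) = (0, false).
Proof.
move=> c2; have := aff_fun_even false c false 0 false; rewrite affE mulr0 => ->.
by rewrite /offset addr0 c2 mulr0 addr0.
Qed.

Lemma aff_fix_twist c : (2 < n)%N -> slope false true * c + c = 0 ->
  exists v, aff (false, c, true) v = v.
Proof.
rewrite /slope /twist expr0 mul1r => n_gt2 Ec.
have hc : half * c = 0.
  (* multiply the hypothesis by quarter *)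
  transitivity (quarter * ((1 + half *+ true) * c + c) - half * quarter * c).
    by rewrite -[in LHS]quarter_double /=; ring.
  by rewrite Ec half_quarter // mulr0 mul0r subr0.
have /eqP : 2 * c = 0 by rewrite -Ec -[LHS]addr0 -hc /=; ring.
rewrite mul2Z_eq0 => /orP[] /eqP->.
  by exists (odd_vert 0); rewrite affE aff_fun_odd mulr0 addr0.
exists (odd_vert 1); rewrite affE aff_fun_odd mulr1 /slope /twist expr0 mul1r /=.
by rewrite mulr1n -addrA half_double addr0.
Qed.

Lemma aff_fix_reflection c : exists v, aff (true, c, false) v = v.
Proof.
rewrite (Z_halves c); set w : Z := (nat_of_ord c)./2%:R; case: odd.
  by exists (2 * (w + 2), false); rewrite affE aff_fun_even /offset /=; congr pair; ring.
by exists (odd_vert w); rewrite affE aff_fun_odd /slope /twist /=; congr odd_vert; ring.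
Qed.

Lemma aff_fix_twisted_reflection c : (2 < n)%N -> slope true true * c + c = 0 ->
  exists v, aff (true, c, true) v = v.
Proof.
move=> n_gt2 Ec; have hc : half * c = 0 by rewrite -oppr0 -Ec /slope /twist /=; ring.
have -> : c = 2 * ((nat_of_ord c)./2)%:R.
  rewrite {1}(Z_halves c); move: hc; rewrite half_mul; case: odd => /= [/eqP|_].
    by rewrite mulr1n (negbTE half_neq0).
  by rewrite addr0.
move: ((nat_of_ord c)./2%:R) => w; have := half_mul w.
case: odd => /= hw; [exists (odd_vert (w + quarter)) | exists (odd_vert w)].
all: rewrite affE aff_fun_odd; congr odd_vert.
  transitivity (w + quarter - (2 * quarter + half * w + half * quarter)).
    by rewrite /slope /twist /=; ring.
  by rewrite quarter_double hw mulr1n half_quarter // half_double addr0 subr0.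
transitivity (w - half * w); first by rewrite /slope /twist /=; ring.
by rewrite hw subr0.
Qed.

Lemma aff_fixed_point p :
  (2 < n)%N -> (aff p * aff p)%g = 1%g -> exists v, aff p v = v.
Proof.
case: p => [[s c] b] n_gt2; rewrite affM !addbb -aff1.
move=> /aff_inj/(congr1 (fun p => p.1.2)).
case: s; case: b => /= Ec.
- exact: aff_fix_twisted_reflection.
- exact: aff_fix_reflection.
- exact: aff_fix_twist.
exists (0, false); apply: aff_fix_translation.
by rewrite -Ec /slope /twist /=; ring.
Qed.

End WreathGroup.

Theorem lemma4p1 (n : nat) (hn : 3 <= n) :
  [/\ (forall g, g \in Ggrp n -> is_aut g),
      #|Ggrp n| = 2 ^ (n + 2),
      [transitive Ggrp n, on edges n | 'P^*],
      (forall e, e \in edges n -> ('C_(Ggrp n)[e | 'P^*])%g = 1%g)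
    & (forall g, g \in Ggrp n -> #[g]%g = 2 -> exists v : vert n, g v = v)].
Proof.
have n_gt1 : 1 < n := ltnW hn.
rewrite (Ggrp_Aff n_gt1); split.
- by move=> _ /imsetP[p _ ->]; apply: aff_aut.
- exact: card_Aff.
- exact: Aff_edge_trans.
- exact: Aff_edge_stab.
move=> _ /imsetP[p _ ->] ord2; apply: aff_fixed_point => //.
by have := expg_order (aff n_gt1 p); rewrite ord2 expgS expg1.
Qed.
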